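(* Let $D$ be a dataset over categorical attributes $A_1,\dots,A_m$ and a metric attribute $M$, let $V$ be a record, let $f_M$ be a deterministic outlier verification function, and let $\epsilon_1>0$. Let $u$ be a utility function on contexts of sensitivity $\Delta u\le 1$: either $u_V(D,C)=|D_C|$ (context population size) or $u_V(D,C)=|D_C\cap D_{C_V}|$ for a fixed starting context $C_V$, with $u_V(D,C)=-\infty$ whenever $f_M(D_C,V)=\mathrm{false}$. Consider the Direct Approach algorithm: enumerate all $2^t$ contexts $C$, collect into $C_M$ those with $f_M(D_C,V)=\mathrm{true}$, and output $\mathrm{Exp}^{\epsilon_1}_u(D,C_M)$. Then this algorithm satisfies $(2\epsilon_1,\ COE_M(\cdot,V))$-Output Constrained Differential Privacy.
   Context: Attribute $A_i$ has a finite domain of size $|A_i|$ (all possible values, whether or not they occur in $D$); $t=\sum_{i=1}^m|A_i|$. A context is a binary vector $C=\langle c_{11},\dots,c_{1|A_1|},\dots,c_{m1},\dots,c_{m|A_m|}\rangle$ of length $t$, where $c_{ij}=1$ means the $j$-th value of $A_i$ is selected. The population $D_C$ is the set of tuples of $D$ whose value in each $A_i$ is one of the values selected for $A_i$ in $C$. An outlier verification function $f_M(D_C,V)$ returns true iff $V$ is an outlier in $D_C$ with respect to $M$ according to a fixed deterministic outlier detection algorithm. $COE_M(D,V)$ is the set of all contexts $C$ with $V\in D_C$ and $f_M(D_C,V)=\mathrm{true}$ (matching contexts). The sensitivity of $u$ is $\Delta u=\max|u(D_1,r)-u(D_2,r)|$ over neighboring datasets $D_1,D_2$ (differing by adding/removing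 one record) and all outputs $r$. The Exponential mechanism $\mathrm{Exp}^{\epsilon}_u(D,\mathcal R)$ outputs $r\in\mathcal R$ with probability $\exp(\epsilon u(D,r)/(2\Delta u))/\sum_{r'\in\mathcal R}\exp(\epsilon u(D,r')/(2\Delta u))$. Datasets $D_1,D_2$ are $f$-neighbors if they differ by adding/removing one record and $f(D_1)=f(D_2)\neq\emptyset$. A randomized mechanism $\mathcal M$ satisfies $(\epsilon,f)$-Output Constrained Differential Privacy if for all $f$-neighbors $D_1,D_2$ and all sets $S$ of outputs, $\Pr[\mathcal M(D_1)\in S]\le e^{\epsilon}\Pr[\mathcal M(D_2)\in S]$. *)

From HB Require Import structures.
From mathcomp Require Import all_boot all_order all_algebra.
From mathcomp Require Import reals.
From mathcomp Require Import sequences exp.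
Set Implicit Arguments. Unset Strict Implicit. Unset Printing Implicit Defensive.
Import Order.TTheory GRing.Theory Num.Theory.
Local Open Scope ring_scope.

Section Defs.
Variable R : realType.
(* m categorical attributes A_0..A_{m-1}; attribute i has domain 'I_(sz i). *)
Variable m : nat.
Variable sz : 'I_m -> nat.

(* an attribute-value pair (i, j) : "the j-th value of A_i";
   there are t = \sum_i sz i of them *)
Definition attrval := {i : 'I_m & 'I_(sz i)}.

(* A context = binary vector of length t, i.e. the set of selected
   attribute-value pairs (c_ij = 1  <->  (i,j) \in C). *)
Definition context := {set attrval}.

(* A record: its categorical values plus its metric attribute M (in R). *)
Definition record := ({dffun forall i : 'I_m, 'I_(sz i)} * R)%type.

(* A dataset is a finite multiset of records, represented by a list. *)
Definition dataset := seq record.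

Definition neighbors (D1 D2 : dataset) : Prop :=
  exists r : record, perm_eq D2 (r :: D1) \/ perm_eq D1 (r :: D2).

Definition in_ctx (C : context) (r : record) : bool :=
  [forall i : 'I_m, (Tagged (fun i => 'I_(sz i)) (r.1 i) : attrval) \in C].

Definition pop (D : dataset) (C : context) : dataset := [seq r <- D | in_ctx C r].

Definition COE (f : dataset -> record -> bool) (D : dataset) (V : record)
  : {set context} :=
  [set C | (V \in pop D C) && f (pop D C) V].

(* finite part of the utility: |D_C| if CV = None,
   |D_C \cap D_{CV}| if CV = Some C_V.  (u = -oo on contexts where f is false;
   those contexts get probability 0, i.e. they are excluded from C_M.) *)
Definition util (CV : option context) (D : dataset) (C : context) : R :=
  match CV with
  | None => (size (pop D C))%:R
  | Some CV' => (size [seq r <- pop D C | in_ctx CV' r])%:R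
  end.

Definition CM (f : dataset -> record -> bool) (D : dataset) (V : record)
  : {set context} :=
  [set C | f (pop D C) V].

Definition direct_prob (f : dataset -> record -> bool) (V : record)
  (CV : option context) (du eps : R) (D : dataset) (C : context) : R :=
  if C \in CM f D V then
    expR (eps * util CV D C / (2 * du)) /
    \sum_(C' in CM f D V) expR (eps * util CV D C' / (2 * du))
  else 0.

Definition direct_Pr (f : dataset -> record -> bool) (V : record)
  (CV : option context) (du eps : R) (D : dataset) (S : {set context}) : R :=
  \sum_(C in S) direct_prob f V CV du eps D C.

Definition COE_neighbors (f : dataset -> record -> bool) (V : record)
  (D1 D2 : dataset) : Prop :=
  neighbors D1 D2 /\ COE f D1 V = COE f D2 V /\ COE f D1 V != set0.

End Defs.

(* When f only accepts populations containing V, the matching contexts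
   COE_M(D, V) are exactly the candidate set C_M(D) of the Direct Approach.
   Hence f-neighbours share the same range C_M, and the algorithm is a plain
   exponential mechanism over a fixed finite range: changing one record moves
   every score by at most du, which scales each weight and the normalising sum
   by at most e^(eps1/2), giving the ratio e^eps1 <= e^(2 eps1). *)
From HB Require Import structures.
From mathcomp Require Import all_boot all_order all_algebra.
From mathcomp Require Import reals.
From mathcomp Require Import sequences exp.
From mathcomp.algebra_tactics Require Import ring lra.
Set Implicit Arguments. Unset Strict Implicit. Unset Printing Implicit Defensive.
Import Order.TTheory GRing.Theory Num.Theory.
Local Open Scope ring_scope.

Section ExponentialMechanism.
Variables (R : realType) (T : finType).

Definition expmech_prob (k : R) (A : {set T}) (u : T -> R) (C : T) : R :=
  if C \in A then expR (k * u C) / \sum_(C' in A) expR (k * u C') else 0.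

Lemma expmech_prob_ge0 k A u C : 0 <= expmech_prob k A u C.
Proof.
rewrite /expmech_prob; case: ifP => // _.
by rewrite divr_ge0 ?sumr_ge0 // => *; rewrite expR_ge0.
Qed.

Lemma expR_mul_le (k d x y : R) :
  0 <= k -> x - y <= d -> expR (k * x) <= expR (k * d) * expR (k * y).
Proof.
move=> k_ge0 xy_le; rewrite -expRD ler_expR -lerBlDr -mulrBr.
exact: ler_wpM2l.
Qed.

Lemma expmech_prob_le (k d : R) (A : {set T}) (u1 u2 : T -> R) C :
  0 <= k -> A != set0 -> {in A, forall C, `|u1 C - u2 C| <= d} ->
  expmech_prob k A u1 C <= expR (2 * k * d) * expmech_prob k A u2 C.
Proof.
move=> k_ge0 /set0Pn[C0 AC0] close.
rewrite /expmech_prob; case: ifP => AC; last by rewrite mulr0.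
set Z1 := \sum_(C' in A) _; set Z2 := \sum_(C' in A) _.
have Z_gt0 (u : T -> R) : 0 < \sum_(C' in A) expR (k * u C').
  rewrite (bigD1 C0) //= ltr_pwDl ?expR_gt0 ?sumr_ge0 // => *.
  exact: expR_ge0.
have up12 C' : C' \in A -> expR (k * u1 C') <= expR (k * d) * expR (k * u2 C').
  by move=> AC'; apply: expR_mul_le; have /ler_normlP[] := close C' AC'.
have up21 C' : C' \in A -> expR (k * u2 C') <= expR (k * d) * expR (k * u1 C').
  move=> AC'; apply: expR_mul_le => //.
  by rewrite -opprB; have /ler_normlP[] := close C' AC'; rewrite lerNl.
have Z21 : Z2 <= expR (k * d) * Z1 by rewrite mulr_sumr ler_sum.
rewrite mulrA ler_pdivrMr ?Z_gt0 // (le_trans (up12 C AC)) //.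
have -> : expR (2 * k * d) = expR (k * d) * expR (k * d).
  by rewrite -expRD -mulrA mulr2n mulrDl mul1r.
rewrite -!mulrA ler_pM2l ?expR_gt0 // mulrCA ler_peMr ?expR_ge0 //.
by rewrite mulrCA mulrC ler_pdivlMr ?Z_gt0 // mul1r.
Qed.

End ExponentialMechanism.

Lemma COE_CM (R : realType) (m : nat) (sz : 'I_m -> nat)
  (f : dataset R sz -> record R sz -> bool) (V : record R sz) (D : dataset R sz) :
  (forall P, f P V -> V \in P) -> COE f D V = CM f D V.
Proof.
move=> fV; apply/setP => C; rewrite !inE.
by case fC: (f _ V); rewrite ?andbT ?andbF ?fV.
Qed.

Lemma direct_probE (R : realType) (m : nat) (sz : 'I_m -> nat)
  (f : dataset R sz -> record R sz -> bool) V CV (du eps : R) D C :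
  direct_prob f V CV du eps D C =
  expmech_prob (eps / (2 * du)) (CM f D V) (util CV D) C.
Proof.
rewrite /direct_prob /expmech_prob mulrAC.
by congr (if _ then _ / _ else _); apply: eq_bigr => C' _; rewrite mulrAC.
Qed.

Theorem theorem2 (R : realType) (m : nat) (sz : 'I_m -> nat)
  (f : dataset R sz -> record R sz -> bool) (V : record R sz)
  (hfV : forall P : dataset R sz, f P V -> V \in P)
  (eps1 : R) (heps : 0 < eps1)
  (CV : option (context sz)) (du : R) (hdu0 : 0 < du) (hdu1 : du <= 1)
  (hsens : forall (D1 D2 : dataset R sz) (C : context sz),
      neighbors D1 D2 -> `|util CV D1 C - util CV D2 C| <= du) :
  forall (D1 D2 : dataset R sz) (S : {set context sz}),
    COE_neighbors f V D1 D2 ->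
    direct_Pr f V CV du eps1 D1 S <= expR (2 * eps1) * direct_Pr f V CV du eps1 D2 S.
Proof.
move=> D1 D2 S [neighD [sameCOE COE_neq0]].
rewrite !COE_CM // in sameCOE COE_neq0.
have k_ge0 : 0 <= eps1 / (2 * du) by rewrite divr_ge0 ?mulr_ge0 ?ltW.
have scale : 2 * (eps1 / (2 * du)) * du = eps1.
  by field; rewrite lt0r_neq0.
rewrite /direct_Pr mulr_sumr; apply: ler_sum => C _.
rewrite !direct_probE -sameCOE.
have close : {in CM f D1 V, forall C, `|util CV D1 C - util CV D2 C| <= du}.
  by move=> C' _; apply: hsens.
apply: le_trans (expmech_prob_le C k_ge0 COE_neq0 close) _.
rewrite scale ler_wpM2r ?expmech_prob_ge0 // ler_expR.
by lra.
Qed.
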